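(* For every $\omega\in\mathbb{R}$ and every $a\in\mathbb{R}$ there exists $b_0>0$ such that for all $b\ge b_0$, $\omega$ lies in the interior of the rotation interval $I(F_{a,b})$.
   Context: $F_{a,b}(x)=x+a+\frac{b}{2\pi}\sin(2\pi x)$ for $(a,b)\in\mathbb{R}\times[0,\infty)$. For such a lift $F$, with $\underline{\rho}_F(x)=\liminf_{n}F^n(x)/n$ and $\overline{\rho}_F(x)=\limsup_{n}F^n(x)/n$, the rotation interval is $I(F)=[\inf_x\underline{\rho}_F(x),\ \sup_x\overline{\rho}_F(x)]$. *)

From Stdlib Require Import Reals.
From Coquelicot Require Import Coquelicot.
Open Scope R_scope.

Definition Fab (a b : R) (x : R) : R := x + a + b / (2 * PI) * sin (2 * PI * x).

Fixpoint iter_fun (f : R -> R) (n : nat) (x : R) : R :=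
  match n with O => x | S k => f (iter_fun f k x) end.

Definition rho_lower (f : R -> R) (x : R) : Rbar :=
  LimInf_seq (fun n => iter_fun f n x / INR n).
Definition rho_upper (f : R -> R) (x : R) : Rbar :=
  LimSup_seq (fun n => iter_fun f n x / INR n).

Definition rot_int_left (f : R -> R) : Rbar :=
  Rbar_glb (fun r => exists x, rho_lower f x = r).
Definition rot_int_right (f : R -> R) : Rbar :=
  Rbar_lub (fun r => exists x, rho_upper f x = r).

Definition in_interior_rot_interval (f : R -> R) (w : R) : Prop :=
  Rbar_lt (rot_int_left f) (Finite w) /\ Rbar_lt (Finite w) (rot_int_right f).

(** A lift [F] of degree one with a point [x] such that [F x = x + k], [k]
    an integer, has rotation number exactly [k] at [x], so [k] lies in the
    rotation interval.  For [F_{a,b}] the equation [F x = x + t] reads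
    [b/(2 pi) sin (2 pi x) = t - a], solvable by [asin] as soon as
    [2 pi |t - a| <= b].  Taking [b] large enough for both integers
    [up omega - 2 < omega < up omega] puts [omega] strictly inside. *)

From Stdlib Require Import Reals Lra Lia ZArith.
From Coquelicot Require Import Coquelicot.
Open Scope R_scope.

Lemma sin_period_Z (y : R) (m : Z) : sin (y + 2 * IZR m * PI) = sin y.
Proof.
  destruct m as [|p|p].
  - rewrite Rmult_0_r, Rmult_0_l, Rplus_0_r. reflexivity.
  - rewrite <- (positive_nat_Z p), <- INR_IZR_INZ. apply sin_period.
  - rewrite <- Pos2Z.opp_pos, opp_IZR, <- (positive_nat_Z p), <- INR_IZR_INZ.
    rewrite <- (sin_period (y + 2 * - INR (Pos.to_nat p) * PI) (Pos.to_nat p)).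
    f_equal. ring.
Qed.

Lemma Fab_shift_Z (a b x : R) (m : Z) : Fab a b (x + IZR m) = Fab a b x + IZR m.
Proof.
  unfold Fab.
  replace (2 * PI * (x + IZR m)) with (2 * PI * x + 2 * IZR m * PI) by ring.
  rewrite sin_period_Z. ring.
Qed.

Lemma is_lim_seq_affine_div (x k : R) :
  is_lim_seq (fun n => (x + INR n * k) / INR n) k.
Proof.
  apply is_lim_seq_ext_loc with (u := fun n => x * / INR n + k).
  - exists 1%nat. intros n Hn. assert (0 < INR n) by (apply lt_0_INR; lia).
    field. lra.
  - replace (Finite k) with (Finite (x * 0 + k)) by (f_equal; ring).
    apply is_lim_seq_plus'; [|apply is_lim_seq_const].
    apply (is_lim_seq_scal_l _ x (Rbar_inv p_infty)).
    apply is_lim_seq_inv; [apply is_lim_seq_INR | discriminate].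
Qed.

Lemma rot_int_left_le_rho_lower (f : R -> R) (x : R) :
  Rbar_le (rot_int_left f) (rho_lower f x).
Proof. exact (proj1 (proj2_sig (Rbar_ex_glb _)) _ (ex_intro _ x eq_refl)). Qed.

Lemma rho_upper_le_rot_int_right (f : R -> R) (x : R) :
  Rbar_le (rho_upper f x) (rot_int_right f).
Proof. exact (proj1 (proj2_sig (Rbar_ex_lub _)) _ (ex_intro _ x eq_refl)). Qed.

Section DegreeOneLift.

Variable f : R -> R.
Hypothesis f_shift_Z : forall x (m : Z), f (x + IZR m) = f x + IZR m.

Lemma iter_translation_point (x : R) (k : Z) :
  f x = x + IZR k -> forall n, iter_fun f n x = x + INR n * IZR k.
Proof.
  intros Hx n. induction n as [|n IH]; simpl iter_fun.
  - simpl. ring.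
  - replace (x + INR n * IZR k) with (x + IZR (Z.of_nat n * k)) in IH
      by (rewrite mult_IZR, <- INR_IZR_INZ; reflexivity).
    rewrite IH, f_shift_Z, Hx, mult_IZR, <- INR_IZR_INZ, S_INR. ring.
Qed.

Lemma rho_translation_point (x : R) (k : Z) :
  f x = x + IZR k -> rho_lower f x = IZR k /\ rho_upper f x = IZR k.
Proof.
  intros Hx.
  assert (Hlim : is_lim_seq (fun n => iter_fun f n x / INR n) (IZR k)).
  { eapply is_lim_seq_ext; [|apply (is_lim_seq_affine_div x (IZR k))].
    intros n. rewrite (iter_translation_point x k Hx). reflexivity. }
  split.
  - apply is_LimInf_seq_unique, is_lim_LimInf_seq, Hlim.
  - apply is_LimSup_seq_unique, is_lim_LimSup_seq, Hlim.
Qed.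

End DegreeOneLift.

Lemma Fab_translation_point (a b t : R) :
  0 < b -> 2 * PI * Rabs (t - a) <= b -> exists x, Fab a b x = x + t.
Proof.
  intros Hb Ht.
  assert (HPI := PI_RGT_0).
  set (s := 2 * PI * (t - a) / b).
  assert (Hs : -1 <= s <= 1).
  { apply Rabs_le_between. unfold s. rewrite Rabs_div, Rabs_mult, (Rabs_pos_eq (2 * PI)),
      (Rabs_pos_eq b) by lra.
    apply Rmult_le_reg_r with b; [lra|]. field_simplify; lra. }
  exists (asin s / (2 * PI)). unfold Fab.
  replace (2 * PI * (asin s / (2 * PI))) with (asin s) by (field; lra).
  rewrite sin_asin by exact Hs. unfold s. field. lra.
Qed.

Lemma Fab_integer_rotation_number (a b : R) (k : Z) :
  0 < b -> 2 * PI * Rabs (IZR k - a) <= b ->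
  exists x, rho_lower (Fab a b) x = IZR k /\ rho_upper (Fab a b) x = IZR k.
Proof.
  intros Hb Hk.
  destruct (Fab_translation_point a b (IZR k) Hb Hk) as [x Hx].
  exists x. exact (rho_translation_point _ (Fab_shift_Z a b) x k Hx).
Qed.

Theorem lemma3p5p1 :
  forall omega a : R, exists b0 : R, 0 < b0 /\
    forall b : R, b0 <= b -> in_interior_rot_interval (Fab a b) omega.
Proof.
  intros omega a.
  assert (HPI := PI_RGT_0). assert (Ha := Rabs_pos (omega - a)).
  exists (2 * PI * (Rabs (omega - a) + 2)). split; [nra|].
  intros b Hb.
  assert (Hnear : forall k : Z, Rabs (IZR k - omega) <= 2 ->
    2 * PI * Rabs (IZR k - a) <= b).
  { intros k Hk.
    pose proof (Rabs_triang (IZR k - omega) (omega - a)) as Htri.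
    replace (IZR k - omega + (omega - a)) with (IZR k - a) in Htri by ring.
    nra. }
  destruct (archimed omega) as [Hup1 Hup2].
  destruct (Fab_integer_rotation_number a b (up omega - 2)) as [x1 [Hx1 _]]; [nra| |].
  { apply Hnear. rewrite minus_IZR. apply Rabs_le. lra. }
  destruct (Fab_integer_rotation_number a b (up omega)) as [x2 [_ Hx2]]; [nra| |].
  { apply Hnear, Rabs_le. lra. }
  split.
  - eapply Rbar_le_lt_trans; [apply (rot_int_left_le_rho_lower _ x1)|].
    rewrite Hx1, minus_IZR. simpl. lra.
  - eapply Rbar_lt_le_trans; [|apply (rho_upper_le_rot_int_right _ x2)].
    rewrite Hx2. simpl. lra.
Qed.
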